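(* Assume each $f_i$ is $\mu$-strongly convex with $\mu>0$ and has $L$-Lipschitz gradient, let $x^*$ be the minimiser of $F=f+h$, and run SAGA with step size $\gamma=\frac{1}{3L}$ starting from $x^0$ with $\phi_i^0=x^0$ for all $i$. Then for all $k\ge 0$, \[ \mathbb{E}\Vert x^{k}-x^{*}\Vert^{2}\leq \left( 1-\min\left\{ \frac{1}{4n},\frac{\mu}{3L}\right\} \right)^{k} \left[\Vert x^{0}-x^{*}\Vert^{2} +\frac{2n}{3L} \left[f(x^{0}) -\langle f'(x^{*}),x^{0}-x^{*}\rangle -f(x^{*})\right]\right], \] where the expectation is over all random index choices up to step $k$.
   Context: Setting: $f(x)=\frac1n\sum_{i=1}^n f_i(x)$ with each $f_i\colon\mathbb{R}^d\to\mathbb{R}$ convex and differentiable with $L$-Lipschitz gradient $f_i'$; $h\colon\mathbb{R}^d\to\mathbb{R}\cup\{+\infty\}$ is proper, closed, convex; $F=f+h$. The proximal operator is $\mathrm{prox}^h_\gamma(y)=\operatorname{argmin}_{x}\{h(x)+\frac{1}{2\gamma}\Vert x-y\Vert^2\}$. SAGA algorithm with step size $\gamma>0$: start from $x^0\in\mathbb{R}^d$ and $\phi_i^0=x^0$ for all $i$. At iteration $k+1$, given $x^k$ and $\phi_1^k,\dots,\phi_n^k$: pick $j$ uniformly at random from $\{1,\dots,n\}$ (independently of the past); set $\phi_j^{k+1}=x^k$ and $\phi_i^{k+1}=\phi_i^k$ for $i\neq j$; set $w^{k+1}=x^k-\gamma\big[f_j'(\phi_j^{k+1})-f_j'(\phi_j^k)+\frac1n\sum_{i=1}^n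 f_i'(\phi_i^k)\big]$ and $x^{k+1}=\mathrm{prox}^h_\gamma(w^{k+1})$. *)

From mathcomp Require Import all_boot.
From Stdlib Require Import Reals ClassicalEpsilon.
Set Implicit Arguments. Unset Strict Implicit. Unset Printing Implicit Defensive.
Local Open Scope R_scope.

Definition rsum (I : finType) (F : I -> R) : R := \big[Rplus/R0]_(i : I) F i.

Definition vec (d : nat) := 'I_d -> R.
Definition vadd d (x y : vec d) : vec d := fun c => x c + y c.
Definition vsub d (x y : vec d) : vec d := fun c => x c - y c.
Definition vscal d (a : R) (x : vec d) : vec d := fun c => a * x c.
Definition vsum d (I : finType) (F : I -> vec d) : vec d := fun c => rsum (fun i => F i c).
Definition inner d (x y : vec d) : R := rsum (fun c : 'I_d => x c * y c).
Definition nsq d (x : vec d) : R := inner x x.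
Definition vnorm d (x : vec d) : R := sqrt (nsq x).

Definition is_gradient d (f : vec d -> R) (g : vec d -> vec d) : Prop :=
  forall x eps, 0 < eps -> exists delta, 0 < delta /\
    forall v : vec d, vnorm v < delta ->
      Rabs (f (vadd x v) - f x - inner (g x) v) <= eps * vnorm v.

Definition convex_fun d (f : vec d -> R) : Prop :=
  forall x y t, 0 <= t <= 1 ->
    f (vadd (vscal t x) (vscal (1 - t) y)) <= t * f x + (1 - t) * f y.

Definition strongly_convex d (mu : R) (f : vec d -> R) : Prop :=
  forall x y t, 0 <= t <= 1 ->
    f (vadd (vscal t x) (vscal (1 - t) y))
      <= t * f x + (1 - t) * f y - mu / 2 * t * (1 - t) * nsq (vsub x y).

Definition lipschitz_grad d (L : R) (g : vec d -> vec d) : Prop :=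
  forall x y, vnorm (vsub (g x) (g y)) <= L * vnorm (vsub x y).

Inductive ereal := EFin of R | EPInf.
Definition ele (a b : ereal) : Prop :=
  match a, b with
  | EFin x, EFin y => x <= y
  | _, EPInf => True
  | EPInf, EFin _ => False
  end.
Definition eadd (a b : ereal) : ereal :=
  match a, b with EFin x, EFin y => EFin (x + y) | _, _ => EPInf end.
(* scaling by a positive real *)
Definition escal (t : R) (a : ereal) : ereal :=
  match a with EFin x => EFin (t * x) | EPInf => EPInf end.
Definition ltRe (r : R) (a : ereal) : Prop :=
  match a with EFin x => r < x | EPInf => True end.

Definition proper_fun d (h : vec d -> ereal) : Prop := exists x, h x <> EPInf.
Definition closed_fun d (h : vec d -> ereal) : Prop :=
  forall x r, ltRe r (h x) -> exists delta, 0 < delta /\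
    forall y, vnorm (vsub y x) < delta -> ltRe r (h y).
Definition convex_efun d (h : vec d -> ereal) : Prop :=
  forall x y t, 0 < t < 1 ->
    ele (h (vadd (vscal t x) (vscal (1 - t) y)))
        (eadd (escal t (h x)) (escal (1 - t) (h y))).

Definition is_prox d (h : vec d -> ereal) (gamma : R) (y x : vec d) : Prop :=
  forall z, ele (eadd (h x) (EFin (/ (2 * gamma) * nsq (vsub x y))))
                (eadd (h z) (EFin (/ (2 * gamma) * nsq (vsub z y)))).
Definition prox d (h : vec d -> ereal) (gamma : R) (y : vec d) : vec d :=
  epsilon (inhabits y) (is_prox h gamma y).

Definition favg n d (fs : 'I_n -> vec d -> R) (x : vec d) : R :=
  / INR n * rsum (fun i => fs i x).
Definition gavg n d (g : 'I_n -> vec d -> vec d) (x : vec d) : vec d :=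
  vscal (/ INR n) (vsum (fun i => g i x)).

Definition saga_step n d (g : 'I_n -> vec d -> vec d) (h : vec d -> ereal)
  (gamma : R) (s : vec d * ('I_n -> vec d)) (j : 'I_n) : vec d * ('I_n -> vec d) :=
  let x := s.1 in
  let phi := s.2 in
  let phi' := fun i => if i == j then x else phi i in
  let avg := vscal (/ INR n) (vsum (fun i => g i (phi i))) in
  let w := vsub x (vscal gamma (vadd (vsub (g j (phi' j)) (g j (phi j))) avg)) in
  (prox h gamma w, phi').

Definition saga_run n d (g : 'I_n -> vec d -> vec d) (h : vec d -> ereal)
  (gamma : R) (x0 : vec d) (js : seq 'I_n) : vec d * ('I_n -> vec d) :=
  foldl (saga_step g h gamma) (x0, fun _ => x0) js.

(* expectation over k independent uniform indices in {1..n} *)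
Definition expect_k (n k : nat) (X : seq 'I_n -> R) : R :=
  / (INR n ^ k) * rsum (fun js : k.-tuple 'I_n => X (tval js)).

(* SAGA is analysed through the Lyapunov function
     T(x, phi) = (1/n) sum_i D_i(phi_i) + (9L/4n) |x - xs|^2,
   where D_i(y) = f_i(y) - f_i(xs) - <f_i'(xs), y - xs> is the Bregman divergence of f_i at the
   minimiser xs.  Since xs = prox(xs - gamma f'(xs)), nonexpansiveness of the prox compares the new
   iterate with the unprojected step.  The second moment of the SAGA direction is at most
   3 E|f_j'(x) - f_j'(xs)|^2 - 2 |f'(x) - f'(xs)|^2 + (3/2) E|f_j'(phi_j) - f_j'(xs)|^2, and the
   interpolation inequality for mu-strongly convex, L-smooth functions turns every term into Bregman
   divergences and |x - xs|^2, so that E T^{k+1} <= (1 - min(1/4n, mu/3L)) T^k.  Iterating over the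
   k uniform indices and using T >= (9L/4n) |x - xs|^2 gives the bound, whose bracket is T^0 divided
   by 9L/4n (with 4n/9L enlarged to 2n/3L).
   Because prox is defined by choice, its existence is proved as well: a minimising sequence of
   h + |. - w|^2 / (2 gamma) is Cauchy by strong convexity of the penalty, and closedness of h
   makes its limit a minimiser. *)

From HB Require Import structures.
From mathcomp Require Import all_boot.
From Stdlib Require Import Reals Lra Psatz Lia Classical ClassicalEpsilon FunctionalExtensionality.
Local Open Scope R_scope.
Set Implicit Arguments. Unset Strict Implicit.

(** * Finite sums and Euclidean geometry *)

Lemma Rplus_associative : associative Rplus. Proof. by move=> *; ring. Qed.
Lemma Rmult_associative : associative Rmult. Proof. by move=> *; ring. Qed.
HB.instance Definition _ := Monoid.isComLaw.Build R R0 Rplus Rplus_associative Rplus_comm Rplus_0_l.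
HB.instance Definition _ := Monoid.isComLaw.Build R R1 Rmult Rmult_associative Rmult_comm Rmult_1_l.
HB.instance Definition _ := Monoid.isMulLaw.Build R R0 Rmult Rmult_0_l Rmult_0_r.
HB.instance Definition _ := Monoid.isAddLaw.Build R Rmult Rplus Rmult_plus_distr_r Rmult_plus_distr_l.

Section RealSums.
Variable I : finType.
Implicit Types F G : I -> R.

Lemma rsum_ext F G : (forall i, F i = G i) -> rsum F = rsum G.
Proof. by move=> FG; apply: eq_bigr => i _. Qed.

Lemma rsum_add F G : rsum (fun i => F i + G i) = rsum F + rsum G.
Proof. exact: big_split. Qed.

Lemma rsum_scal a F : rsum (fun i => a * F i) = a * rsum F.
Proof. by rewrite /rsum big_distrr. Qed.

Lemma rsum_scalr a F : rsum (fun i => F i * a) = rsum F * a.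
Proof. by rewrite Rmult_comm -rsum_scal; apply: rsum_ext => i; ring. Qed.

Lemma rsum_sub F G : rsum (fun i => F i - G i) = rsum F - rsum G.
Proof.
rewrite (rsum_ext (G := fun i => F i + (-1) * G i)) ?rsum_add ?rsum_scal; first ring.
by move=> i; ring.
Qed.

Lemma rsum_le F G : (forall i, F i <= G i) -> rsum F <= rsum G.
Proof. by move=> FG; apply: (big_ind2 (fun a b => a <= b)) => *; [lra | lra | exact: FG]. Qed.

Lemma rsum_le_scal a F G : 0 <= a -> (forall i, F i <= G i) -> a * rsum F <= a * rsum G.
Proof. by move=> a_ge0 FG; apply: Rmult_le_compat_l => //; apply: rsum_le. Qed.

Lemma rsum_ge0 F : (forall i, 0 <= F i) -> 0 <= rsum F.
Proof. by move=> F0; apply: (big_ind (fun a => 0 <= a)) => *; [lra | lra | exact: F0]. Qed.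

Lemma rsum_term F j : (forall i, 0 <= F i) -> F j <= rsum F.
Proof.
move=> F0; rewrite /rsum (bigD1 j) //=.
suff : 0 <= \big[Rplus/R0]_(i | i != j) F i by lra.
by apply: (big_ind (fun a => 0 <= a)) => *; [lra | lra | exact: F0].
Qed.

End RealSums.

Lemma rsum_exchange (I J : finType) (F : I -> J -> R) :
  rsum (fun i => rsum (fun j => F i j)) = rsum (fun j => rsum (fun i => F i j)).
Proof. exact: exchange_big. Qed.

Lemma rsum_const n a : rsum (fun _ : 'I_n => a) = INR n * a.
Proof.
rewrite /rsum big_const_ord; elim: n => [|n IH]; first by rewrite /=; ring.
by rewrite [iter _ _ _]/= IH S_INR; ring.
Qed.

Lemma rsum_update n d (F : 'I_n -> vec d -> R) (phi : 'I_n -> vec d) j x :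
  rsum (fun i => F i (if i == j then x else phi i))
  = rsum (fun i => F i (phi i)) + F j x - F j (phi j).
Proof.
rewrite /rsum (bigD1 j) //= eqxx [in RHS](bigD1 j) //=.
rewrite (eq_bigr (fun i => F i (phi i))); last by move=> i /negbTE ->.
ring.
Qed.

Lemma rsum_tuple0 (T : finType) (F : 0.-tuple T -> R) : rsum F = F [tuple].
Proof.
rewrite /rsum (eq_bigr (fun _ => F [tuple])); last by move=> t _; rewrite tuple0.
by rewrite big_const card_tuple expn0 /=; ring.
Qed.

Lemma rsum_tupleS k (T : finType) (F : k.+1.-tuple T -> R) :
  rsum F = rsum (fun j => rsum (fun t : k.-tuple T => F [tuple of j :: t])).
Proof.
rewrite /rsum pair_bigA /= (reindex (fun p : T * k.-tuple T => [tuple of p.1 :: p.2])) //=.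
exists (fun t : k.+1.-tuple T => (thead t, [tuple of behead t])).
- by move=> [x t] _ /=; congr pair; apply: val_inj.
- by move=> t _; rewrite /= -tuple_eta.
Qed.

Section Vectors.
Variable d : nat.
Implicit Types x y z u v w : vec d.

Lemma vec_ext x y : (forall c, x c = y c) -> x = y.
Proof. by move=> xy; apply: functional_extensionality. Qed.

Lemma inner_sym x y : inner x y = inner y x.
Proof. by apply: rsum_ext => c; ring. Qed.
Lemma inner_addl x y z : inner (vadd x y) z = inner x z + inner y z.
Proof. by rewrite /inner -rsum_add; apply: rsum_ext => c; rewrite /vadd; ring. Qed.
Lemma inner_addr x y z : inner z (vadd x y) = inner z x + inner z y.
Proof. by rewrite /inner -rsum_add; apply: rsum_ext => c; rewrite /vadd; ring. Qed.
Lemma inner_subl x y z : inner (vsub x y) z = inner x z - inner y z.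
Proof. by rewrite /inner -rsum_sub; apply: rsum_ext => c; rewrite /vsub; ring. Qed.
Lemma inner_subr x y z : inner z (vsub x y) = inner z x - inner z y.
Proof. by rewrite /inner -rsum_sub; apply: rsum_ext => c; rewrite /vsub; ring. Qed.
Lemma inner_scall a x z : inner (vscal a x) z = a * inner x z.
Proof. by rewrite /inner -rsum_scal; apply: rsum_ext => c; rewrite /vscal; ring. Qed.
Lemma inner_scalr a x z : inner z (vscal a x) = a * inner z x.
Proof. by rewrite /inner -rsum_scal; apply: rsum_ext => c; rewrite /vscal; ring. Qed.

Lemma inner_suml (I : finType) (F : I -> vec d) z :
  inner (vsum F) z = rsum (fun i => inner (F i) z).
Proof. by rewrite /inner /vsum rsum_exchange; apply: rsum_ext => c; rewrite rsum_scalr. Qed.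

Lemma inner_sumr (I : finType) (F : I -> vec d) z :
  inner z (vsum F) = rsum (fun i => inner z (F i)).
Proof. by rewrite inner_sym inner_suml; apply: rsum_ext => i; apply: inner_sym. Qed.

Lemma nsq_ge0 x : 0 <= nsq x.
Proof. by apply: rsum_ge0 => c; nra. Qed.

Lemma nsq_scal a x : nsq (vscal a x) = a * a * nsq x.
Proof. by rewrite /nsq inner_scall inner_scalr; ring. Qed.

Lemma nsq_add x y : nsq (vadd x y) = nsq x + 2 * inner x y + nsq y.
Proof. by rewrite /nsq inner_addl !inner_addr (inner_sym y x); ring. Qed.

Lemma nsq_subC x y : nsq (vsub x y) = nsq (vsub y x).
Proof. by apply: rsum_ext => c; rewrite /vsub; ring. Qed.

Lemma nsq_sub_diag x : nsq (vsub x x) = 0.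
Proof.
rewrite /nsq /inner (rsum_ext (G := fun _ => 0 * 0)) ?rsum_scal; first ring.
by move=> c; rewrite /vsub; ring.
Qed.

Lemma nsq_midpoint_sub x y w :
  nsq (vsub (vadd (vscal (1 / 2) x) (vscal (1 - 1 / 2) y)) w)
  = (nsq (vsub x w) + nsq (vsub y w)) / 2 - nsq (vsub x y) / 4.
Proof.
rewrite /nsq /inner /Rdiv -rsum_add -!rsum_scalr -rsum_sub.
by apply: rsum_ext => c; rewrite /vsub /vadd /vscal; field.
Qed.

Lemma coord_sqr_le_nsq x c : x c * x c <= nsq x.
Proof. by apply: (rsum_term (F := fun c => x c * x c)) => c'; nra. Qed.

Lemma vnorm_ge0 x : 0 <= vnorm x.
Proof. exact: sqrt_pos. Qed.

Lemma vnorm_sqr x : vnorm x * vnorm x = nsq x.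
Proof. by rewrite sqrt_sqrt //; apply: nsq_ge0. Qed.

Lemma vnorm_scal a x : vnorm (vscal a x) = Rabs a * vnorm x.
Proof. by rewrite /vnorm nsq_scal sqrt_mult; [rewrite sqrt_Rsqr_abs | nra | apply: nsq_ge0]. Qed.

Lemma vnorm_lt x a : 0 < a -> nsq x < a * a -> vnorm x < a.
Proof.
move=> a_gt0 xa; rewrite /vnorm -(sqrt_square a); last lra.
by apply: sqrt_lt_1 => //; [apply: nsq_ge0 | nra].
Qed.

Lemma inner_young x y s : 0 < s -> 2 * inner x y <= s * nsq x + nsq y / s.
Proof.
move=> s_gt0; have := nsq_ge0 (vsub (vscal s x) y).
rewrite {1}/nsq inner_subl !inner_subr !inner_scall !inner_scalr (inner_sym y x).
rewrite -/(nsq x) -/(nsq y) => H.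
suff : 0 <= s * nsq x + nsq y / s - 2 * inner x y by lra.
have -> : s * nsq x + nsq y / s - 2 * inner x y
        = (s * (s * nsq x) - s * inner x y - (s * inner x y - nsq y)) / s by field; lra.
by apply: Rmult_le_pos; [lra | apply/Rlt_le/Rinv_0_lt_compat].
Qed.

Lemma inner_le_nsq x y : 2 * inner x y <= nsq x + nsq y.
Proof. by have := inner_young x y Rlt_0_1; rewrite Rmult_1_l Rdiv_1_r. Qed.

Lemma nsq_add_le x y : nsq (vadd x y) <= 2 * nsq x + 2 * nsq y.
Proof. by rewrite nsq_add; have := inner_le_nsq x y; lra. Qed.

Lemma inner_eq0_nsq x y : nsq x = 0 -> inner x y = 0.
Proof.
move=> x0; rewrite /inner (rsum_ext (G := fun _ => 0 * 0)) ?rsum_scal; first ring.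
by move=> c; have := coord_sqr_le_nsq x c; have := Rle_0_sqr (x c); rewrite /Rsqr x0; nra.
Qed.

Lemma cauchy_schwarz x y : inner x y <= vnorm x * vnorm y.
Proof.
have [a0 a_sq] := (vnorm_ge0 x, vnorm_sqr x).
have [b0 b_sq] := (vnorm_ge0 y, vnorm_sqr y).
have [a_eq0|a_gt0] := Req_dec (vnorm x) 0.
  by rewrite inner_eq0_nsq; [apply: Rmult_le_pos | rewrite -a_sq a_eq0; ring].
have [b_eq0|b_gt0] := Req_dec (vnorm y) 0.
  by rewrite inner_sym inner_eq0_nsq; [apply: Rmult_le_pos | rewrite -b_sq b_eq0; ring].
have := nsq_ge0 (vsub (vscal (vnorm y) x) (vscal (vnorm x) y)).
rewrite /nsq inner_subl !inner_subr !inner_scall !inner_scalr (inner_sym y x) -/(nsq x) -/(nsq y).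
rewrite -a_sq -b_sq => H.
have ab_gt0 : 0 < vnorm x * vnorm y by apply: Rmult_lt_0_compat; lra.
nra.
Qed.

End Vectors.

(** * Smooth and strongly convex functions *)

Lemma le_of_vanishing_slack a b c : (forall t, 0 < t < 1 -> a <= b + t * c) -> a <= b.
Proof.
move=> slack; apply: Rnot_lt_le => ba.
have c1 : 0 < Rabs c + 1 by have := Rabs_pos c; lra.
pose t := Rmin (1 / 2) ((a - b) / (2 * (Rabs c + 1))).
have t_gt0 : 0 < t by apply: Rmin_pos; [lra | apply: Rdiv_lt_0_compat; lra].
have t_lt1 : t < 1 by have := Rmin_l (1 / 2) ((a - b) / (2 * (Rabs c + 1))); rewrite -/t; lra.
have tc : t * c <= t * (Rabs c + 1) by apply: Rmult_le_compat_l; [lra | have := Rle_abs c; lra].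
have : t * (Rabs c + 1) <= (a - b) / 2.
  have -> : (a - b) / 2 = (a - b) / (2 * (Rabs c + 1)) * (Rabs c + 1) by field; lra.
  by apply: Rmult_le_compat_r; [lra | apply: Rmin_r].
by have := slack t (conj t_gt0 t_lt1); lra.
Qed.

Lemma deriv_le_of_slope (psi : R -> R) l a b :
  derivable_pt_lim psi 0 l ->
  (forall s, 0 < s < 1 -> psi s - psi 0 <= s * (a + s * b)) -> l <= a.
Proof.
move=> dpsi slope; apply: (le_of_vanishing_slack (c := 1)) => eps [eps_gt0 _].
have [delta Hdelta] := dpsi eps eps_gt0.
pose s0 := Rmin 1 delta.
have s0_gt0 : 0 < s0 by apply: Rmin_pos; [lra | apply: cond_pos].
suff : l - eps <= a by lra.
apply: (le_of_vanishing_slack (c := s0 * b)) => t [t_gt0 t_lt1].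
have s_gt0 : 0 < t * s0 by apply: Rmult_lt_0_compat.
have s_lt : t * s0 < s0 by nra.
have s_lt1 : t * s0 < 1 by have := Rmin_l 1 delta; rewrite -/s0; lra.
have s_ltd : Rabs (t * s0) < delta.
  by rewrite Rabs_pos_eq; [have := Rmin_r 1 delta; rewrite -/s0; lra | lra].
have /Rabs_def2 [_ close] := Hdelta (t * s0) (Rgt_not_eq _ _ s_gt0) s_ltd.
rewrite Rplus_0_l in close.
have : (psi (t * s0) - psi 0) / (t * s0) <= a + t * s0 * b.
  apply: (Rmult_le_reg_r (t * s0)) => //.
  rewrite /Rdiv Rmult_assoc Rinv_l ?Rmult_1_r; last lra.
  by have := slope _ (conj s_gt0 s_lt1); lra.
lra.
Qed.

Section SmoothFunctions.
Variable d : nat.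
Implicit Types x y v : vec d.
Variables (f : vec d -> R) (gf : vec d -> vec d).
Hypothesis f_grad : is_gradient f gf.

Lemma derivable_pt_lim_line x v t :
  derivable_pt_lim (fun s => f (vadd x (vscal s v))) t (inner (gf (vadd x (vscal t v))) v).
Proof.
move=> eps eps_gt0.
set p := vadd x (vscal t v).
have v0 := vnorm_ge0 v.
have ratio : vnorm v / (vnorm v + 1) <= 1.
  apply: (Rmult_le_reg_r (vnorm v + 1)); first lra.
  by rewrite Rmult_1_l /Rdiv Rmult_assoc Rinv_l; lra.
have [del [del_gt0 Hdel]] := f_grad p (Rdiv_lt_0_compat (eps / 2) (vnorm v + 1) ltac:(lra) ltac:(lra)).
exists (mkposreal _ (Rdiv_lt_0_compat del (vnorm v + 1) del_gt0 ltac:(lra))) => s s_neq0 /= s_lt.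
have -> : vadd x (vscal (t + s) v) = vadd p (vscal s v).
  by apply: vec_ext => c; rewrite /p /vadd /vscal; ring.
have s_gt0 : 0 < Rabs s by apply: Rabs_pos_lt.
have sv_lt : vnorm (vscal s v) < del.
  rewrite vnorm_scal.
  have : Rabs s * (vnorm v + 1) < del.
    have -> : del = del / (vnorm v + 1) * (vnorm v + 1) by field; lra.
    by apply: Rmult_lt_compat_r; lra.
  nra.
have := Hdel _ sv_lt; rewrite inner_scalr vnorm_scal => H.
have -> : (f (vadd p (vscal s v)) - f p) / s - inner (gf p) v
        = (f (vadd p (vscal s v)) - f p - s * inner (gf p) v) / s by field.
rewrite /Rdiv Rabs_mult Rabs_inv; apply: (Rmult_lt_reg_r (Rabs s)) => //.
rewrite Rmult_assoc Rinv_l ?Rmult_1_r; last lra.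
have : eps / 2 / (vnorm v + 1) * (Rabs s * vnorm v) <= eps / 2 * Rabs s.
  have -> : eps / 2 / (vnorm v + 1) * (Rabs s * vnorm v)
          = eps / 2 * Rabs s * (vnorm v / (vnorm v + 1)) by field; lra.
  have : 0 <= eps / 2 * Rabs s by nra.
  nra.
nra.
Qed.

Lemma smooth_upper_bound L : 0 <= L -> lipschitz_grad L gf ->
  forall x y, f y <= f x + inner (gf x) (vsub y x) + L / 2 * nsq (vsub y x).
Proof.
move=> L_ge0 gf_lip x y; set v := vsub y x.
pose psi s := f (vadd x (vscal s v)) - s * inner (gf x) v - L / 2 * (s * s) * nsq v.
have dpsi s : derivable_pt_lim psi s
    (inner (gf (vadd x (vscal s v))) v - 1 * inner (gf x) v - 2 * s * (L / 2 * nsq v)).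
  have D1 := derivable_pt_lim_line x v s.
  have D2 := derivable_pt_lim_scal_right id s 1 (inner (gf x) v) (derivable_pt_lim_id s).
  have D3 := derivable_pt_lim_scal_right Rsqr s (2 * s) (L / 2 * nsq v) (derivable_pt_lim_Rsqr s).
  have := derivable_pt_lim_minus _ _ _ _ _ (derivable_pt_lim_minus _ _ _ _ _ D1 D2) D3.
  by apply: derivable_pt_lim_ext => z; rewrite /minus_fct /id /Rsqr /psi; ring.
have [c [psi_mvt c01]] := MVT_cor2 psi _ 0 1 Rlt_0_1 (fun c _ => dpsi c).
have -> : f y = psi 1 + inner (gf x) v + L / 2 * nsq v.
  rewrite /psi (_ : vadd x (vscal 1 v) = y); first ring.
  by apply: vec_ext => i; rewrite /v /vadd /vscal /vsub; ring.
have -> : f x = psi 0.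
  rewrite /psi (_ : vadd x (vscal 0 v) = x); first ring.
  by apply: vec_ext => i; rewrite /vadd /vscal; ring.
suff : psi 1 - psi 0 <= 0 by lra.
rewrite psi_mvt Rminus_0_r Rmult_1_r.
set gdiff := vsub (gf (vadd x (vscal c v))) (gf x).
have -> : inner (gf (vadd x (vscal c v))) v - 1 * inner (gf x) v = inner gdiff v.
  by rewrite inner_subl; ring.
have lip : vnorm gdiff <= L * (c * vnorm v).
  have := gf_lip (vadd x (vscal c v)) x.
  rewrite (_ : vsub (vadd x (vscal c v)) x = vscal c v) ?vnorm_scal ?Rabs_pos_eq //; first lra.
  by apply: vec_ext => i; rewrite /vadd /vscal /vsub; ring.
have := cauchy_schwarz gdiff v; have := vnorm_ge0 v; have := vnorm_ge0 gdiff.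
rewrite -vnorm_sqr; nra.
Qed.

Lemma strongly_convex_lower_bound mu : strongly_convex mu f ->
  forall x y, f x + inner (gf x) (vsub y x) + mu / 2 * nsq (vsub y x) <= f y.
Proof.
move=> f_sc x y; set v := vsub y x.
suff : inner (gf x) v <= f y - f x - mu / 2 * nsq v by lra.
apply: (deriv_le_of_slope (psi := fun s => f (vadd x (vscal s v))) (b := mu / 2 * nsq v)).
  have := derivable_pt_lim_line x v 0.
  by rewrite (_ : vadd x (vscal 0 v) = x) //; apply: vec_ext => c; rewrite /vadd /vscal; ring.
move=> s [s_gt0 s_lt1].
have := f_sc y x s (conj (Rlt_le _ _ s_gt0) (Rlt_le _ _ s_lt1)).
rewrite (_ : vadd (vscal s y) (vscal (1 - s) x) = vadd x (vscal s v)); last first.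
  by apply: vec_ext => c; rewrite /v /vadd /vscal /vsub; ring.
rewrite (_ : vadd x (vscal 0 v) = x); last by apply: vec_ext => c; rewrite /vadd /vscal; ring.
rewrite -/v; lra.
Qed.

End SmoothFunctions.

Lemma strongly_convex_mod_le_lipschitz d (f : vec d.+1 -> R) gf L mu :
  is_gradient f gf -> strongly_convex mu f -> lipschitz_grad L gf -> 0 <= L -> mu <= L.
Proof.
move=> f_grad f_sc gf_lip L_ge0.
pose e : vec d.+1 := fun c => if c == ord0 then 1 else 0.
have e_unit : nsq e = 1.
  rewrite /nsq /inner /rsum (bigD1 ord0) //= /e eqxx big1; first ring.
  by move=> i /negbTE ->; ring.
pose o : vec d.+1 := fun _ => 0.
have oe : vsub (vadd o e) o = e by apply: vec_ext => c; rewrite /vsub /vadd /o; ring.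
have := strongly_convex_lower_bound f_grad f_sc o (vadd o e).
have := smooth_upper_bound f_grad L_ge0 gf_lip o (vadd o e).
rewrite oe e_unit; lra.
Qed.

(* Both quadratic bounds are evaluated at [a - t u], and [t = 1 / (L - m)] is optimal. *)
Lemma interpolation_ineq d (f : vec d -> R) (gf : vec d -> vec d) m L :
  0 <= m <= L ->
  (forall x y, f x + inner (gf x) (vsub y x) + m / 2 * nsq (vsub y x) <= f y) ->
  (forall x y, f y <= f x + inner (gf x) (vsub y x) + L / 2 * nsq (vsub y x)) ->
  forall a b, nsq (vsub (vsub (gf a) (gf b)) (vscal m (vsub a b)))
    <= 2 * (L - m) * (f a - f b - inner (gf b) (vsub a b) - m / 2 * nsq (vsub a b)).
Proof.
move=> mL f_lower f_upper a b.
set e := vsub a b; set u := vsub (vsub (gf a) (gf b)) (vscal m e).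
set D := f a - f b - inner (gf b) e - m / 2 * nsq e.
have key t : 0 < t -> t * nsq u - (L - m) * (t * t) / 2 * nsq u <= D.
  move=> t_gt0; set z := vsub a (vscal t u).
  have up := f_upper a z; have low := f_lower b z.
  rewrite (_ : vsub z a = vscal (-t) u) in up; last first.
    by apply: vec_ext => i; rewrite /z /vsub /vscal; ring.
  rewrite (_ : vsub z b = vsub e (vscal t u)) in low; last first.
    by apply: vec_ext => i; rewrite /z /e /vsub /vscal; ring.
  have u_sq : nsq u = inner (gf a) u - inner (gf b) u - m * inner e u.
    by rewrite {1}/u /nsq !(inner_subl, inner_scall).
  rewrite /D {1}u_sq; move: up low; clearbody z u e.
  rewrite /nsq !(inner_subl, inner_subr, inner_scall, inner_scalr) (inner_sym u e).
  nra.
have u_ge0 := nsq_ge0 u.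
have [Lm | mL'] := Rle_lt_dec L m.
- have Lm0 : L - m = 0 by lra.
  rewrite Lm0 Rmult_0_r Rmult_0_l.
  have D_ge0 : 0 <= D by have := key 1 Rlt_0_1; rewrite Lm0; lra.
  have [//|u_gt0] := Rle_lt_dec (nsq u) 0.
  have := key ((D + 1) / nsq u) (Rdiv_lt_0_compat (D + 1) _ ltac:(lra) u_gt0).
  rewrite Lm0 (_ : (D + 1) / nsq u * nsq u = D + 1); first lra.
  by field; lra.
- have := key (/ (L - m)) (Rinv_0_lt_compat (L - m) ltac:(lra)).
  have -> : / (L - m) * nsq u - (L - m) * (/ (L - m) * / (L - m)) / 2 * nsq u
          = nsq u / (2 * (L - m)) by field; lra.
  move=> H; have -> : nsq u = nsq u / (2 * (L - m)) * (2 * (L - m)) by field; lra.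
  by rewrite Rmult_comm; apply: Rmult_le_compat_l; lra.
Qed.

(** * Limits of sequences *)

Lemma inv_succ_small eps : 0 < eps ->
  exists N : nat, forall k : nat, (N <= k)%coq_nat -> / (INR k + 1) < eps.
Proof.
move=> eps_gt0; have [N [N_eps N_gt0]] := archimed_cor1 eps eps_gt0.
exists N => k /le_INR Nk; apply: Rle_lt_trans N_eps.
by apply: Rinv_le_contravar; [apply: lt_0_INR | lra].
Qed.

Lemma cv_const a : Un_cv (fun _ => a) a.
Proof. by move=> eps eps_gt0; exists 0%nat => k _; rewrite /Rdist Rminus_diag Rabs_R0. Qed.

Lemma cv_rsum (I : finType) (F : nat -> I -> R) (G : I -> R) :
  (forall i, Un_cv (fun k => F k i) (G i)) -> Un_cv (fun k => rsum (F k)) (rsum G).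
Proof.
move=> FG; rewrite /rsum; elim: (index_enum I) => [|i s IH].
  by rewrite big_nil; apply: (Un_cv_ext (fun _ => 0)); [move=> k; rewrite big_nil | apply: cv_const].
rewrite big_cons; apply: (Un_cv_ext (fun k => F k i + \big[Rplus/R0]_(j <- s) F k j)).
  by move=> k; rewrite big_cons.
exact: CV_plus.
Qed.

Section VectorSequences.
Variable d : nat.
Implicit Types (zs : nat -> vec d) (p w : vec d).

Lemma cv_nsq_sub zs p w : (forall c, Un_cv (fun k => zs k c) (p c)) ->
  Un_cv (fun k => nsq (vsub (zs k) w)) (nsq (vsub p w)).
Proof.
move=> zs_p; apply: (cv_rsum (F := fun k c => vsub (zs k) w c * vsub (zs k) w c)) => c.
by apply: CV_mult; apply: CV_minus; [apply: zs_p | apply: cv_const | apply: zs_p | apply: cv_const].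
Qed.

Lemma vec_cauchy_cv zs :
  (forall eps, 0 < eps -> exists N, forall k l, (N <= k)%coq_nat -> (N <= l)%coq_nat ->
     nsq (vsub (zs k) (zs l)) < eps) ->
  exists p, forall c, Un_cv (fun k => zs k c) (p c).
Proof.
move=> zs_cauchy.
have coord_cauchy c : Cauchy_crit (fun k => zs k c).
  move=> eps eps_gt0; have [N HN] := zs_cauchy (eps * eps) ltac:(nra).
  exists N => k l kN lN; rewrite /Rdist.
  have : (zs k c - zs l c) * (zs k c - zs l c) <= nsq (vsub (zs k) (zs l)).
    exact: coord_sqr_le_nsq (vsub (zs k) (zs l)) c.
  have := HN k l kN lN; have := Rabs_pos (zs k c - zs l c).
  have : Rabs (zs k c - zs l c) * Rabs (zs k c - zs l c) = (zs k c - zs l c) * (zs k c - zs l c).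
    by rewrite -Rabs_mult Rabs_pos_eq //; apply: Rle_0_sqr.
  nra.
exists (fun c => proj1_sig (R_complete _ (coord_cauchy c))) => c.
exact: proj2_sig (R_complete _ (coord_cauchy c)).
Qed.

Lemma closed_fun_cv_le (h : vec d -> ereal) zs (rs : nat -> R) p a :
  closed_fun h -> (forall k, h (zs k) = EFin (rs k)) ->
  Un_cv (fun k => nsq (vsub (zs k) p)) 0 ->
  (forall eps, 0 < eps -> exists N, forall k, (N <= k)%coq_nat -> rs k < a + eps) ->
  exists r, h p = EFin r /\ r <= a.
Proof.
move=> h_closed h_zs zs_p rs_ub.
have not_above eps : 0 < eps -> ~ ltRe (a + eps) (h p).
  move=> eps_gt0 /h_closed [del [del_gt0 near_p]].
  have [N1 HN1] := zs_p (del * del) ltac:(nra).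
  have [N2 HN2] := rs_ub eps eps_gt0.
  pose k := Nat.max N1 N2.
  have := HN1 k ltac:(lia); rewrite /Rdist Rminus_0_r Rabs_pos_eq; last exact: nsq_ge0.
  move=> /(vnorm_lt del_gt0) /near_p; rewrite h_zs /=.
  by have := HN2 k ltac:(lia); lra.
case hp: (h p) => [r|]; last by case: (not_above 1 Rlt_0_1); rewrite hp.
exists r; split => //; apply: Rnot_lt_le => ar.
by apply: (not_above ((r - a) / 2) ltac:(lra)); rewrite hp /=; lra.
Qed.

End VectorSequences.

(** * The proximal operator *)

Section Prox.
Variables (d : nat) (h : vec d -> ereal) (gam : R).
Implicit Types x y z w p : vec d.
Hypotheses (gam_gt0 : 0 < gam) (h_proper : proper_fun h) (h_closed : closed_fun h).
Hypothesis h_convex : convex_efun h.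

Lemma prox_variational w p : is_prox h gam w p ->
  exists hp, h p = EFin hp /\
    forall z r, h z = EFin r -> hp - r <= / gam * inner (vsub p w) (vsub z p).
Proof.
move=> p_prox; have [hp hp_eq] : exists hp, h p = EFin hp.
  case: h_proper => x1; have := p_prox x1.
  by case: (h x1) => [a|] //; case: (h p) => [b|] //= _ _; exists b.
exists hp; split => // z r hz.
apply: (le_of_vanishing_slack (c := / (2 * gam) * nsq (vsub z p))) => t t01.
set zt := vadd (vscal t z) (vscal (1 - t) p).
have := h_convex z p t01; rewrite hz hp_eq /= -/zt; case: (h zt) (p_prox zt) => [rt|] //.
rewrite hp_eq /= (_ : vsub zt w = vadd (vsub p w) (vscal t (vsub z p))); last first.
  by apply: vec_ext => c; rewrite /zt /vadd /vsub /vscal; ring.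
rewrite nsq_add inner_scalr nsq_scal Rinv_mult => p_min zt_conv.
have inv_gam := Rinv_0_lt_compat gam gam_gt0.
set I := inner (vsub p w) (vsub z p) in p_min *; set N := nsq (vsub z p) in p_min *.
have : t * (hp - r) <= t * (/ gam * I + t * (/ 2 * / gam * N)) by nra.
by case: t01 => t_gt0 _ /(Rmult_le_reg_l _ _ _ t_gt0); lra.
Qed.

Lemma prox_nonexpansive w1 w2 p1 p2 : is_prox h gam w1 p1 -> is_prox h gam w2 p2 ->
  nsq (vsub p1 p2) <= nsq (vsub w1 w2).
Proof.
move=> /prox_variational [a [ha var1]] /prox_variational [b [hb var2]].
have v1 := var1 p2 b hb; have v2 := var2 p1 a ha.
have inv_gam := Rinv_0_lt_compat gam gam_gt0.
have sum_ge0 : 0 <= inner (vsub p1 w1) (vsub p2 p1) + inner (vsub p2 w2) (vsub p1 p2) by nra.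
have : inner (vsub p1 w1) (vsub p2 p1) + inner (vsub p2 w2) (vsub p1 p2)
       = inner (vsub w1 w2) (vsub p1 p2) - nsq (vsub p1 p2).
  by rewrite /nsq /inner -rsum_add -rsum_sub; apply: rsum_ext => c; rewrite /vsub; ring.
by have := inner_le_nsq (vsub w1 w2) (vsub p1 p2); lra.
Qed.

(* Closedness at a point of finite value bounds [h] below near it, and convexity
   propagates this to an affine-in-distance lower bound everywhere. *)
Lemma closed_convex_minorant :
  exists x1 A B, 0 <= B /\ forall z r, h z = EFin r -> A - B * vnorm (vsub z x1) <= r.
Proof.
case: h_proper => x1; case hx1: (h x1) => [a|] // _.
have [del [del_gt0 near_x1]] : exists del, 0 < del /\
    forall y, vnorm (vsub y x1) < del -> ltRe (a - 1) (h y).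
  by apply: h_closed; rewrite hx1 /=; lra.
exists x1, (a - 1), (2 / del); split; first by apply: Rlt_le; apply: Rdiv_lt_0_compat; lra.
move=> z r hz; set s := vnorm (vsub z x1).
have s_ge0 : 0 <= s := vnorm_ge0 _.
have Bs_ge0 : 0 <= 2 / del * s.
  by apply: Rmult_le_pos => //; apply: Rlt_le; apply: Rdiv_lt_0_compat; lra.
have [s_lt | s_ge] := Rlt_le_dec s del.
  by have := near_x1 z s_lt; rewrite hz /=; lra.
pose t := del / (2 * s).
have t_gt0 : 0 < t by apply: Rdiv_lt_0_compat; lra.
have t_lt1 : t < 1.
  apply: (Rmult_lt_reg_r (2 * s)); first lra.
  by rewrite /t /Rdiv Rmult_assoc Rinv_l; lra.
set y := vadd (vscal t z) (vscal (1 - t) x1).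
have y_near : vnorm (vsub y x1) < del.
  rewrite (_ : vsub y x1 = vscal t (vsub z x1)); last first.
    by apply: vec_ext => c; rewrite /y /vadd /vsub /vscal; ring.
  rewrite vnorm_scal Rabs_pos_eq -/s; last lra.
  by rewrite (_ : t * s = del / 2); [lra | rewrite /t; field; lra].
have := near_x1 y y_near; have := h_convex z x1 (conj t_gt0 t_lt1).
rewrite hz hx1 /= -/y; case: (h y) => [ry|] //= y_conv y_big.
have : t * (a - 2 / del * s) <= t * r.
  by rewrite (_ : t * (a - 2 / del * s) = t * a - 1); [lra | rewrite /t; field; lra].
by move/(Rmult_le_reg_l _ _ _ t_gt0); lra.
Qed.

Section ProxExistence.
Variable w : vec d.

Let penalty z := / (2 * gam) * nsq (vsub z w).

Lemma prox_objective_bounded_below : exists C, forall z r, h z = EFin r -> C <= r + penalty z.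
Proof.
have [x1 [A [B [B_ge0 minor]]]] := closed_convex_minorant.
exists (A - gam * (B * B) - / (2 * gam) * nsq (vsub w x1)) => z r hz.
have := minor z r hz; set s := vnorm (vsub z x1) => rA.
have s_sq : s * s <= 2 * nsq (vsub z w) + 2 * nsq (vsub w x1).
  rewrite /s vnorm_sqr (_ : vsub z x1 = vadd (vsub z w) (vsub w x1)); first exact: nsq_add_le.
  by apply: vec_ext => c; rewrite /vadd /vsub; ring.
have amgm : B * s <= s * s / (4 * gam) + gam * (B * B).
  suff : 0 <= (s - 2 * gam * B) * (s - 2 * gam * B) / (4 * gam).
    by rewrite (_ : _ / (4 * gam) = s * s / (4 * gam) + gam * (B * B) - B * s); [lra | field; lra].
  by apply: Rmult_le_pos; [apply: Rle_0_sqr | apply/Rlt_le/Rinv_0_lt_compat; lra].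
suff : s * s / (4 * gam) <= penalty z + / (2 * gam) * nsq (vsub w x1) by lra.
rewrite /penalty -Rmult_plus_distr_l (_ : s * s / (4 * gam) = / (2 * gam) * (s * s / 2)).
  by apply: Rmult_le_compat_l; [apply/Rlt_le/Rinv_0_lt_compat; lra | lra].
by field; lra.
Qed.

Lemma prox_objective_inf : exists m,
  (forall z r, h z = EFin r -> m <= r + penalty z) /\
  (forall eps, 0 < eps -> exists z r, h z = EFin r /\ r + penalty z < m + eps).
Proof.
have [C C_lb] := prox_objective_bounded_below.
pose E (a : R) := exists z r, h z = EFin r /\ a = - (r + penalty z).
have E_bound : bound E.
  by exists (- C) => _ [z [r [hz ->]]]; have := C_lb z r hz; lra.
have E_nonempty : exists a, E a.
  case: h_proper => x1; case hx1: (h x1) => [a|] // _.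
  by exists (- (a + penalty x1)), x1, a.
have [M [M_ub M_lub]] := completeness E E_bound E_nonempty.
exists (- M); split.
  by move=> z r hz; have := M_ub _ (ex_intro _ z (ex_intro _ r (conj hz erefl))); lra.
move=> eps eps_gt0; apply: NNPP => no_close.
suff : M <= M - eps by lra.
apply: M_lub => _ [z [r [hz ->]]].
by apply: Rnot_lt_le => close; apply: no_close; exists z, r; split => //; lra.
Qed.

(* The penalty is strongly convex, so the midpoint of two near-minimizers is much better
   than both. *)
Lemma near_minimizers_close m z1 r1 z2 r2 :
  (forall z r, h z = EFin r -> m <= r + penalty z) -> h z1 = EFin r1 -> h z2 = EFin r2 ->
  nsq (vsub z1 z2) <= 4 * gam * ((r1 + penalty z1 - m) + (r2 + penalty z2 - m)).
Proof.
move=> m_lb hz1 hz2.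
have half : 0 < 1 / 2 < 1 by lra.
have := h_convex z1 z2 half; rewrite hz1 hz2 /=.
case hmid: (h _) => [rmid|] //= mid_conv.
have := m_lb _ _ hmid; rewrite /penalty nsq_midpoint_sub => mid_ge.
have -> : nsq (vsub z1 z2) = 8 * gam * (/ (2 * gam) * (nsq (vsub z1 z2) / 4)) by field; lra.
rewrite /penalty; nra.
Qed.

Lemma prox_exists : exists p, is_prox h gam w p.
Proof.
have [m [m_lb m_inf]] := prox_objective_inf.
pose e k := / (INR k + 1).
have e_gt0 k : 0 < e k by apply: Rinv_0_lt_compat; have := pos_INR k; lra.
have near_min k : {zr : vec d * R | h zr.1 = EFin zr.2 /\ zr.2 + penalty zr.1 < m + e k}.
  apply: constructive_indefinite_description.
  by have [z [r [hz close]]] := m_inf _ (e_gt0 k); exists (z, r).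
pose zs k := (proj1_sig (near_min k)).1; pose rs k := (proj1_sig (near_min k)).2.
have [h_zs zs_min] : (forall k, h (zs k) = EFin (rs k)) /\ (forall k, rs k + penalty (zs k) < m + e k).
  by split => k; case: (proj2_sig (near_min k)).
have [p zs_p] : exists p, forall c, Un_cv (fun k => zs k c) (p c).
  apply: vec_cauchy_cv => eps eps_gt0.
  have [N HN] := inv_succ_small (Rdiv_lt_0_compat eps (8 * gam) eps_gt0 ltac:(lra)).
  exists N => k l kN lN; apply: Rle_lt_trans (near_minimizers_close m_lb (h_zs k) (h_zs l)) _.
  have := zs_min k; have := zs_min l; have := HN k kN; have := HN l lN.
  rewrite -/(e k) -/(e l) => ? ? ? ?.
  rewrite [X in _ < X](_ : eps = 4 * gam * (eps / (8 * gam) + eps / (8 * gam))); last by field; lra.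
  by apply: Rmult_lt_compat_l; lra.
have pen_cv : Un_cv (fun k => penalty (zs k)) (penalty p).
  by apply: CV_mult; [apply: cv_const | apply: cv_nsq_sub].
have [r [hp r_le]] : exists r, h p = EFin r /\ r <= m - penalty p.
  apply: (closed_fun_cv_le h_closed h_zs).
    by rewrite -(nsq_sub_diag p); apply: cv_nsq_sub.
  move=> eps eps_gt0.
  have [N1 HN1] := pen_cv (eps / 2) ltac:(lra).
  have [N2 HN2] := inv_succ_small (Rdiv_lt_0_compat eps 2 eps_gt0 ltac:(lra)).
  exists (Nat.max N1 N2) => k kN.
  have := HN1 k ltac:(lia); have := HN2 k ltac:(lia); have := zs_min k; rewrite /Rdist -/(e k).
  by move=> ? ? /Rabs_def2; lra.
exists p => z; rewrite hp; case hz: (h z) => [rz|] //=.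
by have := m_lb z rz hz; rewrite /penalty in r_le *; lra.
Qed.

End ProxExistence.

Lemma prox_is_prox w : is_prox h gam w (prox h gam w).
Proof. exact: epsilon_spec (prox_exists w). Qed.

End Prox.

Section Minimizer.
Variables (d : nat) (h : vec d -> ereal) (F0 : vec d -> R) (G0 : vec d -> vec d) (L : R).
Variable xs : vec d.
Hypotheses (h_proper : proper_fun h) (h_convex : convex_efun h).
Hypothesis F0_upper : forall x y, F0 y <= F0 x + inner (G0 x) (vsub y x) + L / 2 * nsq (vsub y x).
Hypothesis xs_min : forall x, ele (eadd (EFin (F0 xs)) (h xs)) (eadd (EFin (F0 x)) (h x)).

Lemma minimizer_optimality : exists b, h xs = EFin b /\
  forall z r, h z = EFin r -> b - r <= inner (G0 xs) (vsub z xs).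
Proof.
case: h_proper => x1; case hx1: (h x1) => [a|] // _.
have := xs_min x1; rewrite hx1; case hxs: (h xs) => [b|] //= _.
exists b; split => // z r hz.
apply: (le_of_vanishing_slack (c := L / 2 * nsq (vsub z xs))) => t t01.
set zt := vadd (vscal t z) (vscal (1 - t) xs).
have := h_convex z xs t01; rewrite hz hxs /= -/zt.
case hzt: (h zt) => [rt|] //= zt_conv.
have := xs_min zt; rewrite hxs hzt /= => xs_le.
have := F0_upper xs zt.
rewrite (_ : vsub zt xs = vscal t (vsub z xs)) ?inner_scalr ?nsq_scal => [upper|]; last first.
  by apply: vec_ext => c; rewrite /zt /vadd /vsub /vscal; ring.
have : t * (b - r) <= t * (inner (G0 xs) (vsub z xs) + t * (L / 2 * nsq (vsub z xs))) by nra.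
by case: t01 => t_gt0 _ /(Rmult_le_reg_l _ _ _ t_gt0).
Qed.

Lemma minimizer_prox_fixpoint gam : 0 < gam -> is_prox h gam (vsub xs (vscal gam (G0 xs))) xs.
Proof.
move=> gam_gt0; have [b [hxs opt]] := minimizer_optimality.
move=> z; rewrite hxs; case hz: (h z) => [r|] //=.
have := opt z r hz.
rewrite (_ : vsub z (vsub xs (vscal gam (G0 xs))) = vadd (vsub z xs) (vscal gam (G0 xs))); last first.
  by apply: vec_ext => c; rewrite /vadd /vsub /vscal; ring.
rewrite (_ : vsub xs (vsub xs (vscal gam (G0 xs))) = vscal gam (G0 xs)); last first.
  by apply: vec_ext => c; rewrite /vsub /vscal; ring.
rewrite nsq_add inner_scalr (inner_sym (vsub z xs)) Rmult_plus_distr_l Rmult_plus_distr_l.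
have -> : / (2 * gam) * (2 * (gam * inner (G0 xs) (vsub z xs))) = inner (G0 xs) (vsub z xs).
  by field; lra.
have : 0 <= / (2 * gam) * nsq (vsub z xs).
  by apply: Rmult_le_pos; [apply/Rlt_le/Rinv_0_lt_compat; lra | apply: nsq_ge0].
lra.
Qed.

End Minimizer.

(** * Linear convergence of SAGA *)

Lemma expect_foldl_contract n (S : Type) (step : S -> 'I_n -> S) (T : S -> R) rho :
  0 < INR n -> 0 <= rho ->
  (forall s, / INR n * rsum (fun j => T (step s j)) <= rho * T s) ->
  forall k s, / INR n ^ k * rsum (fun js : k.-tuple 'I_n => T (foldl step s js)) <= rho ^ k * T s.
Proof.
move=> n_gt0 rho_ge0 one_step; elim=> [|k IH] s.
  by rewrite rsum_tuple0 /=; lra.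
have nk_gt0 : 0 < INR n ^ k by apply: pow_lt.
rewrite rsum_tupleS [INR n ^ _]/= Rinv_mult Rmult_assoc -rsum_scal.
apply: Rle_trans (rsum_le_scal (Rlt_le _ _ (Rinv_0_lt_compat _ n_gt0)) (fun j => IH (step s j))) _.
rewrite rsum_scal [rho ^ k.+1]/= (Rmult_comm rho) !Rmult_assoc -Rmult_assoc (Rmult_comm (/ INR n)).
by rewrite Rmult_assoc; apply: Rmult_le_compat_l; [apply: pow_le | apply: one_step].
Qed.

(* In the application, [A] is the Bregman part of the Lyapunov function, [B] the mean Bregman
   divergence at [x], [P = |x - xs|^2], [I = <f'(x) - f'(xs), x - xs>], [Gx] and [Hp] the mean
   squared gradient differences at [x] and at the table points, [Q = |f'(x) - f'(xs)|^2], and [V]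
   the second moment of the SAGA direction. *)
Lemma saga_lyapunov_algebra N L mu A B P I Gx Hp Q V :
  0 < N -> 0 < L -> 0 < mu <= L -> 0 <= B ->
  V <= 3 * Gx - 2 * Q + 3 / 2 * Hp -> Hp <= 2 * L * A ->
  2 * (L - mu) * B + Gx + L * mu * P <= 2 * L * I -> 2 * mu * B <= Q ->
  (1 - / N) * A + / N * B + 9 * L / (4 * N) * (P - 2 * / (3 * L) * I + / (3 * L) * / (3 * L) * V)
  <= (1 - / (4 * N)) * A + 9 * L / (4 * N) * (1 - mu / (3 * L)) * P.
Proof.
move=> N_gt0 L_gt0 mu_L B_ge0 V_le Hp_le I_ge Q_ge.
have slack : 0 <= 3 * L * A - 4 * L * B + 6 * L * I - V - 3 * L * mu * P by nra.
suff : 0 <= (3 * L * A - 4 * L * B + 6 * L * I - V - 3 * L * mu * P) / (4 * N * L).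
  have -> : (3 * L * A - 4 * L * B + 6 * L * I - V - 3 * L * mu * P) / (4 * N * L)
    = (1 - / (4 * N)) * A + 9 * L / (4 * N) * (1 - mu / (3 * L)) * P
      - ((1 - / N) * A + / N * B
         + 9 * L / (4 * N) * (P - 2 * / (3 * L) * I + / (3 * L) * / (3 * L) * V)) by field; lra.
  lra.
by apply: Rmult_le_pos => //; apply/Rlt_le/Rinv_0_lt_compat; nra.
Qed.

Section Saga.
Variables (n d : nat).
Hypothesis n_gt0 : 0 < INR n.
Local Notation N := (INR n).
Local Notation mean F := (/ INR n * rsum F).
Implicit Types (X Z : 'I_n -> vec d) (v : vec d).

Lemma mean_const a : mean (fun _ : 'I_n => a) = a.
Proof. by rewrite rsum_const; field; lra. Qed.

Lemma mean_inner v X : mean (fun j => inner v (X j)) = inner v (vscal (/ N) (vsum X)).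
Proof. by rewrite inner_scalr inner_sumr. Qed.

(* Young's inequality with weight 2 on the cross term of [Xb + (X j - Xb) + (Zb - Z j)]
   produces the constants 3 and 3/2. *)
Lemma saga_direction_second_moment X Z :
  let Xb := vscal (/ N) (vsum X) in let Zb := vscal (/ N) (vsum Z) in
  mean (fun j => nsq (vadd (vsub (X j) (Z j)) Zb))
  <= 3 * mean (fun j => nsq (X j)) - 2 * nsq Xb + 3 / 2 * mean (fun j => nsq (Z j)).
Proof.
move=> Xb Zb.
have pointwise j : nsq (vadd (vsub (X j) (Z j)) Zb) <=
    3 * nsq (X j) + 3 / 2 * nsq (Z j) + (-4) * inner Xb (X j) + (-2) * inner Xb (Z j)
    + (-3) * inner Zb (Z j) + 2 * nsq Xb + 2 * inner Xb Zb + 3 / 2 * nsq Zb.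
  rewrite (_ : vadd (vsub (X j) (Z j)) Zb = vadd Xb (vadd (vsub (X j) Xb) (vsub Zb (Z j)))); last first.
    by apply: vec_ext => c; rewrite /vadd /vsub; ring.
  rewrite 2!nsq_add; have := inner_young (vsub (X j) Xb) (vsub Zb (Z j)) (s := 2) ltac:(lra).
  rewrite /nsq !(inner_addr, inner_subl, inner_subr, inner_addl).
  rewrite ?(inner_sym (X j) Xb) ?(inner_sym (Z j) Zb) ?(inner_sym Zb Xb) ?(inner_sym (Z j) Xb).
  by rewrite ?(inner_sym Zb (X j)) ?(inner_sym (Z j) (X j)); lra.
apply: Rle_trans (rsum_le_scal (Rlt_le _ _ (Rinv_0_lt_compat _ n_gt0)) pointwise) _.
rewrite !rsum_add !rsum_scal !rsum_const.
have := mean_inner Xb X; have := mean_inner Xb Z; have := mean_inner Zb Z; rewrite -/Xb -/Zb.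
move=> EZ EXZ EX; have := nsq_ge0 Zb.
have cancel c : / N * (N * c) = c by field; lra.
have := cancel (nsq Xb); have := cancel (inner Xb Zb); have := cancel (nsq Zb).
rewrite -/(nsq Xb) in EX; rewrite -/(nsq Zb) in EZ; lra.
Qed.

Variables (fs : 'I_n -> vec d -> R) (g : 'I_n -> vec d -> vec d) (h : vec d -> ereal).
Variables (L mu : R) (xs : vec d).
Hypotheses (L_gt0 : 0 < L) (mu_gt0 : 0 < mu) (mu_le_L : mu <= L).
Hypothesis fs_grad : forall i, is_gradient (fs i) (g i).
Hypothesis fs_sc : forall i, strongly_convex mu (fs i).
Hypothesis g_lip : forall i, lipschitz_grad L (g i).
Hypotheses (h_proper : proper_fun h) (h_closed : closed_fun h) (h_convex : convex_efun h).
Hypothesis xs_min : forall x, ele (eadd (EFin (favg fs xs)) (h xs)) (eadd (EFin (favg fs x)) (h x)).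

Local Notation gam := (/ (3 * L)).

Lemma fs_upper i x y : fs i y <= fs i x + inner (g i x) (vsub y x) + L / 2 * nsq (vsub y x).
Proof. exact (smooth_upper_bound (fs_grad i) (Rlt_le _ _ L_gt0) (g_lip i) x y). Qed.

Lemma fs_lower i x y : fs i x + inner (g i x) (vsub y x) + mu / 2 * nsq (vsub y x) <= fs i y.
Proof. exact (strongly_convex_lower_bound (fs_grad i) (fs_sc i) x y). Qed.

Lemma inner_gavg x v : inner (gavg g x) v = mean (fun i => inner (g i x) v).
Proof. by rewrite /gavg inner_scall inner_suml. Qed.

Lemma favg_upper x y :
  favg fs y <= favg fs x + inner (gavg g x) (vsub y x) + L / 2 * nsq (vsub y x).
Proof.
rewrite inner_gavg /favg -(mean_const (L / 2 * nsq (vsub y x))) -!Rmult_plus_distr_l -!rsum_add.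
by apply: rsum_le_scal; [apply/Rlt_le/Rinv_0_lt_compat | move=> i; apply: fs_upper].
Qed.

Definition bregman i y := fs i y - fs i xs - inner (g i xs) (vsub y xs).

Lemma bregman_ge0 i y : 0 <= bregman i y.
Proof.
by rewrite /bregman; have := fs_lower i xs y; have := nsq_ge0 (vsub y xs); nra.
Qed.

Lemma bregman_le_inner i x :
  bregman i x <= inner (vsub (g i x) (g i xs)) (vsub x xs) - mu / 2 * nsq (vsub x xs).
Proof.
have := fs_lower i x xs; rewrite /bregman inner_subl nsq_subC.
rewrite (_ : vsub xs x = vscal (-1) (vsub x xs)) ?inner_scalr; first lra.
by apply: vec_ext => c; rewrite /vsub /vscal; ring.
Qed.

Lemma grad_diff_le_bregman i y : nsq (vsub (g i y) (g i xs)) <= 2 * L * bregman i y.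
Proof.
have fs_lower0 x z : fs i x + inner (g i x) (vsub z x) + 0 / 2 * nsq (vsub z x) <= fs i z.
  by have := fs_lower i x z; have := nsq_ge0 (vsub z x); rewrite Rdiv_0_l; nra.
have := interpolation_ineq (conj (Rle_refl 0) (Rlt_le _ _ L_gt0)) fs_lower0 (@fs_upper i) y xs.
rewrite /bregman (_ : vsub (vsub (g i y) (g i xs)) (vscal 0 (vsub y xs)) = vsub (g i y) (g i xs)).
  by rewrite Rminus_0_r Rdiv_0_l Rmult_0_l Rminus_0_r.
by apply: vec_ext => c; rewrite /vsub /vscal; ring.
Qed.

Lemma bregman_interpolation i x :
  2 * (L - mu) * bregman i x + nsq (vsub (g i x) (g i xs)) + L * mu * nsq (vsub x xs)
  <= 2 * L * inner (vsub (g i x) (g i xs)) (vsub x xs).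
Proof.
have := interpolation_ineq (conj (Rlt_le _ _ mu_gt0) mu_le_L) (@fs_lower i) (@fs_upper i) xs x.
have -> : nsq (vsub (vsub (g i xs) (g i x)) (vscal mu (vsub xs x)))
  = nsq (vsub (g i x) (g i xs)) - 2 * mu * inner (vsub (g i x) (g i xs)) (vsub x xs)
    + mu * mu * nsq (vsub x xs).
  rewrite /nsq /inner -!rsum_scal -rsum_sub -rsum_add.
  by apply: rsum_ext => c; rewrite /vsub /vscal; ring.
have -> : inner (g i x) (vsub xs x) = - inner (g i x) (vsub x xs).
  rewrite (_ : vsub xs x = vscal (-1) (vsub x xs)) ?inner_scalr; first ring.
  by apply: vec_ext => c; rewrite /vsub /vscal; ring.
rewrite (nsq_subC xs x) /bregman inner_subl.
by have := nsq_ge0 (vsub x xs); nra.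
Qed.

Definition lyap_phi (phi : 'I_n -> vec d) := mean (fun i => bregman i (phi i)).
Definition lyap_weight := 9 * L / (4 * N).
Definition lyap (s : vec d * ('I_n -> vec d)) := lyap_phi s.2 + lyap_weight * nsq (vsub s.1 xs).

Lemma lyap_phi_ge0 phi : 0 <= lyap_phi phi.
Proof.
apply: Rmult_le_pos; first by apply/Rlt_le/Rinv_0_lt_compat.
by apply: rsum_ge0 => i; apply: bregman_ge0.
Qed.

Lemma lyap_weight_gt0 : 0 < lyap_weight.
Proof. by apply: Rdiv_lt_0_compat; lra. Qed.

Lemma gam_gt0 : 0 < gam.
Proof. by apply: Rinv_0_lt_compat; lra. Qed.

Section OneStep.
Variables (x : vec d) (phi : 'I_n -> vec d).

Let X j := vsub (g j x) (g j xs).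
Let Z j := vsub (g j (phi j)) (g j xs).
Let Xb := vscal (/ N) (vsum X).
Let Zb := vscal (/ N) (vsum Z).
Let v := vsub x xs.
Let e j := vadd (vsub (X j) (Z j)) Zb.
Let B := mean (fun i => bregman i x).

(* [xs] is a fixed point of the same proximal step driven by the exact gradient at [xs]. *)
Lemma saga_step_dist j : nsq (vsub (saga_step g h gam (x, phi) j).1 xs)
  <= nsq v - 2 * gam * inner v (e j) + gam * gam * nsq (e j).
Proof.
have xs_fix := minimizer_prox_fixpoint h_proper h_convex favg_upper xs_min gam_gt0.
rewrite /saga_step /= eqxx; set w := vsub x _.
apply: Rle_trans (prox_nonexpansive gam_gt0 h_proper h_convex
  (prox_is_prox gam_gt0 h_proper h_closed h_convex w) xs_fix) _.
rewrite (_ : vsub w _ = vadd v (vscal (- gam) (e j))); last first.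
  apply: vec_ext => c; rewrite /w /v /e /X /Z /Zb /gavg /vadd /vsub /vscal /vsum rsum_sub.
  by ring.
by rewrite nsq_add inner_scalr nsq_scal; lra.
Qed.

Lemma mean_lyap_phi_update :
  mean (fun j => lyap_phi (fun i => if i == j then x else phi i)) = (1 - / N) * lyap_phi phi + / N * B.
Proof.
rewrite /lyap_phi /B (rsum_ext (G := fun j => / N *
    (rsum (fun i => bregman i (phi i)) + bregman j x - bregman j (phi j)))); last first.
  by move=> j; rewrite (rsum_update bregman).
rewrite rsum_scal rsum_sub rsum_add rsum_const; field; lra.
Qed.

Lemma mean_inner_direction : mean (fun j => inner v (e j)) = inner v Xb.
Proof.
rewrite (rsum_ext (G := fun j => inner v (X j) + (-1) * inner v (Z j) + inner v Zb)); last first.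
  by move=> j; rewrite /e inner_addr inner_subr; ring.
rewrite !rsum_add rsum_scal rsum_const Rmult_plus_distr_l Rmult_plus_distr_l.
rewrite mean_inner (Rmult_comm (/ N) (-1 * _)) Rmult_assoc (Rmult_comm _ (/ N)) mean_inner.
by rewrite -/Xb -/Zb (_ : / N * (N * inner v Zb) = inner v Zb); [ring | field; lra].
Qed.

Lemma mean_grad_diff_phi : mean (fun j => nsq (Z j)) <= 2 * L * lyap_phi phi.
Proof.
rewrite /lyap_phi (Rmult_comm (2 * L)) Rmult_assoc -rsum_scalr.
apply: rsum_le_scal; first by apply/Rlt_le/Rinv_0_lt_compat.
by move=> i; rewrite Rmult_comm; apply: grad_diff_le_bregman.
Qed.

Lemma mean_grad_diff_x : mean (fun i => inner (X i) v) = inner Xb v.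
Proof. by rewrite /Xb inner_scall inner_suml. Qed.

Lemma mean_interpolation :
  2 * (L - mu) * B + mean (fun j => nsq (X j)) + L * mu * nsq v <= 2 * L * inner Xb v.
Proof.
rewrite -mean_grad_diff_x /B -(mean_const (L * mu * nsq v)).
rewrite (Rmult_comm (2 * (L - mu))) (Rmult_comm (2 * L)) !Rmult_assoc -!Rmult_plus_distr_l.
rewrite -!rsum_scalr -!rsum_add; apply: rsum_le_scal; first by apply/Rlt_le/Rinv_0_lt_compat.
by move=> i; have := bregman_interpolation i x; rewrite /X /v; lra.
Qed.

Lemma mean_strong_monotone : 2 * mu * B <= nsq Xb.
Proof.
have B_le : B <= inner Xb v - mu / 2 * nsq v.
  rewrite -mean_grad_diff_x -(mean_const (mu / 2 * nsq v)) -Rmult_minus_distr_l -rsum_sub.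
  by apply: rsum_le_scal; [apply/Rlt_le/Rinv_0_lt_compat | move=> i; apply: bregman_le_inner].
have := inner_young Xb v (Rinv_0_lt_compat mu mu_gt0).
rewrite /Rdiv Rinv_inv => young.
have : 2 * mu * B <= mu * (/ mu * nsq Xb) by nra.
by rewrite -Rmult_assoc Rinv_r ?Rmult_1_l; lra.
Qed.

Lemma mean_saga_step_dist :
  mean (fun j => nsq (vsub (saga_step g h gam (x, phi) j).1 xs))
  <= nsq v - 2 * gam * inner Xb v + gam * gam * mean (fun j => nsq (e j)).
Proof.
apply: Rle_trans (rsum_le_scal (Rlt_le _ _ (Rinv_0_lt_compat _ n_gt0)) saga_step_dist) _.
rewrite (rsum_ext (G := fun j => nsq v + (-2 * gam) * inner v (e j) + gam * gam * nsq (e j))).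
  rewrite !rsum_add !rsum_scal rsum_const (inner_sym Xb v) -mean_inner_direction.
  by right; field; lra.
by move=> j; ring.
Qed.

Lemma saga_one_step : mean (fun j => lyap (saga_step g h gam (x, phi) j))
  <= (1 - / (4 * N)) * lyap_phi phi + lyap_weight * (1 - mu / (3 * L)) * nsq (vsub x xs).
Proof.
have B_ge0 : 0 <= B.
  by apply: Rmult_le_pos; [apply/Rlt_le/Rinv_0_lt_compat | apply: rsum_ge0 => i; apply: bregman_ge0].
apply: (Rle_trans _ ((1 - / N) * lyap_phi phi + / N * B + lyap_weight
    * (nsq v - 2 * gam * inner Xb v + gam * gam * mean (fun j => nsq (e j))))).
  rewrite /lyap (rsum_ext (G := fun j => lyap_phi (fun i => if i == j then x else phi i)
      + lyap_weight * nsq (vsub (saga_step g h gam (x, phi) j).1 xs))) //.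
  rewrite rsum_add rsum_scal Rmult_plus_distr_l mean_lyap_phi_update.
  rewrite (Rmult_comm lyap_weight) -Rmult_assoc (Rmult_comm _ lyap_weight).
  apply: Rplus_le_compat_l; apply: Rmult_le_compat_l; first exact/Rlt_le/lyap_weight_gt0.
  exact: mean_saga_step_dist.
exact: saga_lyapunov_algebra n_gt0 L_gt0 (conj mu_gt0 mu_le_L) B_ge0
  (saga_direction_second_moment X Z) mean_grad_diff_phi mean_interpolation mean_strong_monotone.
Qed.

End OneStep.

Local Notation rate := (1 - Rmin (/ (4 * N)) (mu / (3 * L))).

Lemma rate_ge0 : 0 <= rate.
Proof.
have N_ge1 : 1 <= N by apply: (le_INR 1); apply: INR_lt; rewrite /=; lra.
have := Rmin_l (/ (4 * N)) (mu / (3 * L)).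
suff : / (4 * N) <= 1 by lra.
by rewrite -Rinv_1; apply: Rinv_le_contravar; lra.
Qed.

Lemma saga_contraction s : mean (fun j => lyap (saga_step g h gam s j)) <= rate * lyap s.
Proof.
case: s => x phi; apply: Rle_trans (saga_one_step x phi) _.
have := lyap_phi_ge0 phi; have := Rmult_le_pos _ _ (Rlt_le _ _ lyap_weight_gt0) (nsq_ge0 (vsub x xs)).
have := Rmin_l (/ (4 * N)) (mu / (3 * L)); have := Rmin_r (/ (4 * N)) (mu / (3 * L)).
rewrite /lyap /=; nra.
Qed.

Lemma lyap_phi_const x0 :
  lyap_phi (fun _ => x0) = favg fs x0 - inner (gavg g xs) (vsub x0 xs) - favg fs xs.
Proof.
rewrite /lyap_phi /bregman inner_gavg /favg -!Rmult_minus_distr_l -!rsum_sub.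
by congr (_ * _); apply: rsum_ext => i; ring.
Qed.

Lemma saga_bound k x0 :
  expect_k k (fun js => nsq (vsub (saga_run g h gam x0 js).1 xs))
  <= rate ^ k *
     (nsq (vsub x0 xs) + 2 * N / (3 * L) * (favg fs x0 - inner (gavg g xs) (vsub x0 xs) - favg fs xs)).
Proof.
rewrite -lyap_phi_const; set B0 := lyap_phi _.
have B0_ge0 : 0 <= B0 := lyap_phi_ge0 _.
have w_gt0 := lyap_weight_gt0.
have rk_ge0 : 0 <= rate ^ k by apply: pow_le; apply: rate_ge0.
have Nk_gt0 : 0 < / N ^ k by apply/Rinv_0_lt_compat/pow_lt.
have dist_le js :
    nsq (vsub (saga_run g h gam x0 js).1 xs) <= / lyap_weight * lyap (saga_run g h gam x0 js).
  rewrite /lyap Rmult_plus_distr_l -Rmult_assoc Rinv_l ?Rmult_1_l; last lra.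
  by have := lyap_phi_ge0 (saga_run g h gam x0 js).2; have := Rinv_0_lt_compat _ w_gt0; nra.
apply: Rle_trans (rsum_le_scal (Rlt_le _ _ Nk_gt0) (fun js : k.-tuple 'I_n => dist_le js)) _.
rewrite rsum_scal (Rmult_comm (/ lyap_weight)) -Rmult_assoc.
apply: Rle_trans (Rmult_le_compat_r _ _ _ (Rlt_le _ _ (Rinv_0_lt_compat _ w_gt0))
  (expect_foldl_contract n_gt0 rate_ge0 saga_contraction k (x0, fun _ => x0))) _.
rewrite /lyap /= -/B0 Rmult_assoc; apply: Rmult_le_compat_l => //.
rewrite /lyap_weight Rmult_plus_distr_r (Rmult_comm lyap_weight) Rmult_assoc Rinv_r; last lra.
have : B0 * / (9 * L / (4 * N)) = 4 * N / (9 * L) * B0 by field; lra.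
have : 4 * N / (9 * L) <= 2 * N / (3 * L).
  by rewrite /Rdiv !Rinv_mult; have := Rinv_0_lt_compat _ L_gt0; nra.
nra.
Qed.

End Saga.

Lemma nsq_vec0 (v : vec 0) : nsq v = 0.
Proof. by rewrite /nsq /inner /rsum big_ord0. Qed.

Lemma saga_bound_vec0 n (fs : 'I_n -> vec 0 -> R) (g : 'I_n -> vec 0 -> vec 0)
  (h : vec 0 -> ereal) (gam rate c : R) (x0 xs : vec 0) k :
  expect_k k (fun js => nsq (vsub (saga_run g h gam x0 js).1 xs))
  <= rate ^ k * (nsq (vsub x0 xs) + c * (favg fs x0 - inner (gavg g xs) (vsub x0 xs) - favg fs xs)).
Proof.
rewrite /expect_k (rsum_ext (G := fun _ => 0 * 0)) => [|js]; last by rewrite nsq_vec0; ring.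
rewrite rsum_scal nsq_vec0 (_ : x0 = xs); last by apply: vec_ext => -[].
by rewrite /inner /rsum big_ord0; right; ring.
Qed.

Unset Implicit Arguments.
Set Strict Implicit.

Theorem mainTheorem6 (n d : nat) (fs : 'I_n -> vec d -> R) (g : 'I_n -> vec d -> vec d)
  (h : vec d -> ereal) (L mu : R) (x0 xstar : vec d) :
  (0 < n)%nat -> 0 < L -> 0 < mu ->
  (forall i, is_gradient (fs i) (g i)) ->
  (forall i, convex_fun (fs i)) ->
  (forall i, strongly_convex mu (fs i)) ->
  (forall i, lipschitz_grad L (g i)) ->
  proper_fun h -> closed_fun h -> convex_efun h ->
  (* xstar minimises F = f + h *)
  (forall x, ele (eadd (EFin (favg fs xstar)) (h xstar)) (eadd (EFin (favg fs x)) (h x))) ->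
  forall k : nat,
    expect_k k (fun js => nsq (vsub (saga_run g h (/ (3 * L)) x0 js).1 xstar))
    <= (1 - Rmin (/ (4 * INR n)) (mu / (3 * L))) ^ k *
       (nsq (vsub x0 xstar)
        + 2 * INR n / (3 * L) *
          (favg fs x0 - inner (gavg g xstar) (vsub x0 xstar) - favg fs xstar)).
Proof.
move=> n_pos L_gt0 mu_gt0 fs_grad _ fs_sc g_lip h_proper h_closed h_convex xs_min k.
have n_gt0 : 0 < INR n by apply: lt_0_INR; apply/ltP.
case: d fs g h x0 xstar fs_grad fs_sc g_lip h_proper h_closed h_convex xs_min
  => [|d] fs g h x0 xstar fs_grad fs_sc g_lip h_proper h_closed h_convex xs_min.
  exact: saga_bound_vec0.
pose i0 : 'I_n := Ordinal n_pos.
have mu_le_L := strongly_convex_mod_le_lipschitz (fs_grad i0) (fs_sc i0) (g_lip i0) (Rlt_le _ _ L_gt0).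
exact (saga_bound n_gt0 L_gt0 mu_gt0 mu_le_L fs_grad fs_sc g_lip
  h_proper h_closed h_convex xs_min k x0).
Qed.
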